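(* Let $(A_1,A_2,A_3)$ take values in $\{0,1\}^3$ with a palindromic distribution $p$ (i.e. $p(a)=p(\sim a)$ for all $a$) with $p(a)>0$ for all $a$. Let $\lambda_{12}=2^{-3}\sum_{a\in\{0,1\}^3}(-1)^{a_1+a_2}\log p(a)$ be the two-factor log-linear interaction of $A_1,A_2$; let $\rho_{12|3}$ be the correlation of $A_1$ and $A_2$ in the conditional distribution given $A_3=0$ (which equals the conditional correlation given $A_3=1$); let $\rho_{st}$ denote the marginal Pearson correlation of $A_s,A_t$ and $\rho_{12.3}=(\rho_{12}-\rho_{13}\rho_{23})/\{(1-\rho_{13}^2)(1-\rho_{23}^2)\}^{1/2}$ the partial correlation. Then (i) $A_1\perp\!\!\!\perp A_2\mid A_3 \iff \lambda_{12}=0\iff \rho_{12|3}=0\iff\rho_{12.3}=0$; (ii) the conditional dependence of $A_1,A_2$ given $A_3$ is positive $\iff\lambda_{12}>0\iff\rho_{12|3}>0\iff\rho_{12.3}>0$; (iii) the conditional dependence of $A_1,A_2$ given $A_3$ is negative $\iff\lambda_{12}<0\iff\rho_{12|3}<0\iff\rho_{12.3}<0$.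
   Context: $\sim a$ denotes the complement of the binary vector $a$. A conditional dependence of $A_1,A_2$ given $A_3$ is called positive (negative) if the conditional correlation $\rho_{12|3}$ is positive (negative), equivalently if the conditional odds-ratio is $>1$ ($<1$). *)

From Stdlib Require Import Reals.
Open Scope R_scope.

(* A distribution of (A1,A2,A3) on {0,1}^3 is a function p : bool -> bool -> bool -> R;
   the boolean value [true] encodes 1 and [false] encodes 0. *)
Definition dist3 := bool -> bool -> bool -> R.

Definition b2R (b : bool) : R := if b then 1 else 0.

Definition sumB (f : bool -> R) : R := f false + f true.
Definition sum3 (f : bool -> bool -> bool -> R) : R :=
  sumB (fun a1 => sumB (fun a2 => sumB (fun a3 => f a1 a2 a3))).

Definition is_distribution (p : dist3) : Prop :=
  (forall a1 a2 a3, 0 <= p a1 a2 a3) /\ sum3 p = 1.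

Definition palindromic (p : dist3) : Prop :=
  forall a1 a2 a3, p a1 a2 a3 = p (negb a1) (negb a2) (negb a3).

Definition X1 : bool -> bool -> bool -> R := fun a1 _ _ => b2R a1.
Definition X2 : bool -> bool -> bool -> R := fun _ a2 _ => b2R a2.
Definition X3 : bool -> bool -> bool -> R := fun _ _ a3 => b2R a3.

Definition Ex (p : dist3) (f : bool -> bool -> bool -> R) : R :=
  sum3 (fun a1 a2 a3 => p a1 a2 a3 * f a1 a2 a3).
Definition cov (p : dist3) (f g : bool -> bool -> bool -> R) : R :=
  Ex p (fun a1 a2 a3 => f a1 a2 a3 * g a1 a2 a3) - Ex p f * Ex p g.
Definition corr (p : dist3) (f g : bool -> bool -> bool -> R) : R :=
  cov p f g / sqrt (cov p f f * cov p g g).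

Definition pA3 (p : dist3) (c : bool) : R := sumB (fun a1 => sumB (fun a2 => p a1 a2 c)).
Definition cond3 (p : dist3) (c : bool) : dist3 :=
  fun a1 a2 a3 => if Bool.eqb a3 c then p a1 a2 a3 / pA3 p c else 0.

Definition sgn2 (a1 a2 : bool) : R := if Bool.eqb a1 a2 then 1 else -1. (* (-1)^(a1+a2) *)
Definition lambda12 (p : dist3) : R :=
  / 8 * sum3 (fun a1 a2 a3 => sgn2 a1 a2 * ln (p a1 a2 a3)).

Definition rho12 (p : dist3) : R := corr p X1 X2.
Definition rho13 (p : dist3) : R := corr p X1 X3.
Definition rho23 (p : dist3) : R := corr p X2 X3.

Definition rho12_given3 (p : dist3) : R := corr (cond3 p false) X1 X2.

Definition partial_rho12_3 (p : dist3) : R :=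
  (rho12 p - rho13 p * rho23 p) / sqrt ((1 - rho13 p ^ 2) * (1 - rho23 p ^ 2)).

Definition cond_indep12_3 (p : dist3) : Prop :=
  forall a1 a2 c,
    p a1 a2 c * pA3 p c = sumB (fun b2 => p a1 b2 c) * sumB (fun b1 => p b1 a2 c).

Definition cond_odds_ratio (p : dist3) (c : bool) : R :=
  (p true true c * p false false c) / (p true false c * p false true c).

Definition cond_dep_positive (p : dist3) : Prop := forall c, 1 < cond_odds_ratio p c.
Definition cond_dep_negative (p : dist3) : Prop := forall c, cond_odds_ratio p c < 1.

(* Palindromy makes p determined by its A3 = 0 slice p000, p110, p010, p100, whose
   total mass is 1/2, and gives both slices the same odds ratio
   p000 p110 / (p010 p100).  Hence every quantity in the statement has the sign of the
   cross difference D = p000 p110 - p010 p100: lambda12 = (ln (p000 p110) -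
   ln (p010 p100)) / 4, the conditional covariance given A3 = 0 is 4 D, and the
   numerator of the partial correlation is 16 D, since all marginals are fair coins. *)
From Stdlib Require Import Reals Lra.
Open Scope R_scope.

Definition same_sign (x y : R) : Prop :=
  (x = 0 <-> y = 0) /\ (0 < x <-> 0 < y) /\ (x < 0 <-> y < 0).

Lemma same_sign_trans x y z : same_sign x y -> same_sign y z -> same_sign x z.
Proof. unfold same_sign; tauto. Qed.

Lemma same_sign_pos_mul k x y : 0 < k -> x = k * y -> same_sign x y.
Proof.
  intros Hk ->; unfold same_sign.
  destruct (Rtotal_order y 0) as [Hy | [-> | Hy]].
  - assert (k * y < 0) by (apply Rmult_pos_neg; lra); lra.
  - rewrite Rmult_0_r; lra.
  - assert (0 < k * y) by (apply Rmult_lt_0_compat; lra); lra.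
Qed.

Lemma same_sign_ln_sub x y : 0 < x -> 0 < y -> same_sign (ln x - ln y) (x - y).
Proof.
  intros Hx Hy; unfold same_sign.
  destruct (Rtotal_order x y) as [Hxy | [-> | Hxy]].
  - pose proof (ln_increasing _ _ Hx Hxy); lra.
  - lra.
  - pose proof (ln_increasing _ _ Hy Hxy); lra.
Qed.

Lemma same_sign_div_sub1 x y : 0 < y -> same_sign (x / y - 1) (x - y).
Proof.
  intros Hy; apply (same_sign_pos_mul (/ y)).
  - now apply Rinv_0_lt_compat.
  - field; lra.
Qed.

Lemma same_sign_corr_cov q f g :
  0 < cov q f f -> 0 < cov q g g -> same_sign (corr q f g) (cov q f g).
Proof.
  intros Hf Hg; unfold corr.
  assert (Hs : 0 < sqrt (cov q f f * cov q g g))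
    by (apply sqrt_lt_R0, Rmult_lt_0_compat; assumption).
  apply (same_sign_pos_mul (/ sqrt (cov q f f * cov q g g))).
  - now apply Rinv_0_lt_compat.
  - field; lra.
Qed.

Lemma corr_quarter_var q f g :
  cov q f f = / 4 -> cov q g g = / 4 -> corr q f g = 4 * cov q f g.
Proof.
  intros Hf Hg; unfold corr; rewrite Hf, Hg.
  rewrite sqrt_square by lra; field.
Qed.

Lemma one_sub_sqr_affine_pos x : 0 < x < / 2 -> 0 < 1 - (4 * x - 1) ^ 2.
Proof.
  intros Hx; replace (1 - (4 * x - 1) ^ 2) with ((2 - 4 * x) * (4 * x)) by ring.
  apply Rmult_lt_0_compat; lra.
Qed.

Definition cross_difference (p : dist3) : R :=
  p false false false * p true true false - p false true false * p true false false.

Section Palindromic.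

Variable p : dist3.
Hypothesis Hsum : sum3 p = 1.
Hypothesis Hpal : palindromic p.
Hypothesis Hpos : forall a1 a2 a3, 0 < p a1 a2 a3.

Local Notation p000 := (p false false false).
Local Notation p110 := (p true true false).
Local Notation p010 := (p false true false).
Local Notation p100 := (p true false false).
Local Notation D := (cross_difference p).

Lemma pal111 : p true true true = p000.  Proof. now rewrite Hpal. Qed.
Lemma pal001 : p false false true = p110. Proof. now rewrite Hpal. Qed.
Lemma pal101 : p true false true = p010.  Proof. now rewrite Hpal. Qed.
Lemma pal011 : p false true true = p100.  Proof. now rewrite Hpal. Qed.

Ltac expand_sums :=
  unfold cov, Ex, cond3, sum3, pA3, sumB, X1, X2, X3, b2R, cross_difference;
  simpl; rewrite ?pal111, ?pal001, ?pal101, ?pal011.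

Lemma slice0_mass : p000 + p110 + p010 + p100 = / 2.
Proof. pose proof Hsum as H; revert H; expand_sums; lra. Qed.

Ltac slice_identity :=
  pose proof slice0_mass; expand_sums;
  replace p100 with (/ 2 - p000 - p110 - p010) by lra; field; lra.

Lemma lambda12_palindromic :
  lambda12 p = / 4 * (ln (p000 * p110) - ln (p010 * p100)).
Proof.
  unfold lambda12, sgn2; expand_sums.
  rewrite !ln_mult by apply Hpos; field.
Qed.

Lemma same_sign_lambda12 : same_sign (lambda12 p) D.
Proof.
  rewrite lambda12_palindromic.
  apply (same_sign_trans _ (ln (p000 * p110) - ln (p010 * p100))).
  - apply (same_sign_pos_mul (/ 4)); lra.
  - apply same_sign_ln_sub; apply Rmult_lt_0_compat; apply Hpos.
Qed.

Lemma cov_cond0_X1X2 : cov (cond3 p false) X1 X2 = 4 * D.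
Proof. slice_identity. Qed.

Lemma cov_cond0_X1X1 : cov (cond3 p false) X1 X1 = 4 * ((p100 + p110) * (p000 + p010)).
Proof. slice_identity. Qed.

Lemma cov_cond0_X2X2 : cov (cond3 p false) X2 X2 = 4 * ((p010 + p110) * (p000 + p100)).
Proof. slice_identity. Qed.

Lemma same_sign_rho12_given3 : same_sign (rho12_given3 p) D.
Proof.
  pose proof (Hpos false false false); pose proof (Hpos true true false);
  pose proof (Hpos false true false); pose proof (Hpos true false false).
  apply (same_sign_trans _ (cov (cond3 p false) X1 X2)).
  - apply same_sign_corr_cov.
    + rewrite cov_cond0_X1X1; apply Rmult_lt_0_compat; [lra | apply Rmult_lt_0_compat; lra].
    + rewrite cov_cond0_X2X2; apply Rmult_lt_0_compat; [lra | apply Rmult_lt_0_compat; lra].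
  - apply (same_sign_pos_mul 4); [lra | apply cov_cond0_X1X2].
Qed.

Lemma var_X1 : cov p X1 X1 = / 4.
Proof. slice_identity. Qed.

Lemma var_X2 : cov p X2 X2 = / 4.
Proof. slice_identity. Qed.

Lemma var_X3 : cov p X3 X3 = / 4.
Proof. slice_identity. Qed.

Lemma rho12_palindromic : rho12 p = 4 * (p000 + p110) - 1.
Proof.
  unfold rho12; rewrite corr_quarter_var by (apply var_X1 || apply var_X2).
  slice_identity.
Qed.

Lemma rho13_palindromic : rho13 p = 4 * (p000 + p010) - 1.
Proof.
  unfold rho13; rewrite corr_quarter_var by (apply var_X1 || apply var_X3).
  slice_identity.
Qed.

Lemma rho23_palindromic : rho23 p = 4 * (p000 + p100) - 1.
Proof.
  unfold rho23; rewrite corr_quarter_var by (apply var_X2 || apply var_X3).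
  slice_identity.
Qed.

Lemma partial_rho12_3_numerator : rho12 p - rho13 p * rho23 p = 16 * D.
Proof.
  rewrite rho12_palindromic, rho13_palindromic, rho23_palindromic.
  slice_identity.
Qed.

Lemma same_sign_partial_rho12_3 : same_sign (partial_rho12_3 p) D.
Proof.
  pose proof slice0_mass.
  pose proof (Hpos false false false); pose proof (Hpos true true false);
  pose proof (Hpos false true false); pose proof (Hpos true false false).
  assert (HQ : 0 < sqrt ((1 - rho13 p ^ 2) * (1 - rho23 p ^ 2))).
  { rewrite rho13_palindromic, rho23_palindromic.
    apply sqrt_lt_R0, Rmult_lt_0_compat; apply one_sub_sqr_affine_pos; lra. }
  apply (same_sign_pos_mul (16 / sqrt ((1 - rho13 p ^ 2) * (1 - rho23 p ^ 2)))).
  - apply Rdiv_lt_0_compat; lra.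
  - unfold partial_rho12_3; rewrite partial_rho12_3_numerator; field; lra.
Qed.

Lemma cond_indep12_3_iff : cond_indep12_3 p <-> D = 0.
Proof.
  unfold cond_indep12_3; split.
  - intros Hci; specialize (Hci false false false); revert Hci; expand_sums; nra.
  - intros HD a1 a2 c; unfold cross_difference in HD; destruct a1, a2, c; expand_sums; nra.
Qed.

Lemma same_sign_cond_odds_ratio c : same_sign (cond_odds_ratio p c - 1) D.
Proof.
  assert (Hcd : 0 < p010 * p100) by (apply Rmult_lt_0_compat; apply Hpos).
  unfold cond_odds_ratio, cross_difference; destruct c; rewrite ?pal111, ?pal001, ?pal101, ?pal011.
  - rewrite (Rmult_comm p010); apply same_sign_div_sub1; lra.
  - rewrite (Rmult_comm p110), (Rmult_comm p100); apply same_sign_div_sub1; lra.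
Qed.

Lemma cond_dep_positive_iff : cond_dep_positive p <-> 0 < D.
Proof.
  unfold cond_dep_positive; split.
  - intros H; specialize (H false).
    apply (same_sign_cond_odds_ratio false); lra.
  - intros HD c; assert (0 < cond_odds_ratio p c - 1)
      by (apply (same_sign_cond_odds_ratio c); lra); lra.
Qed.

Lemma cond_dep_negative_iff : cond_dep_negative p <-> D < 0.
Proof.
  unfold cond_dep_negative; split.
  - intros H; specialize (H false).
    apply (same_sign_cond_odds_ratio false); lra.
  - intros HD c; assert (cond_odds_ratio p c - 1 < 0)
      by (apply (same_sign_cond_odds_ratio c); lra); lra.
Qed.

End Palindromic.

Theorem proposition3p1 (p : dist3) :
  is_distribution p ->
  palindromic p ->
  (forall a1 a2 a3, 0 < p a1 a2 a3) ->
  ((cond_indep12_3 p <-> lambda12 p = 0) /\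
   (lambda12 p = 0 <-> rho12_given3 p = 0) /\
   (rho12_given3 p = 0 <-> partial_rho12_3 p = 0)) /\
  ((cond_dep_positive p <-> 0 < lambda12 p) /\
   (0 < lambda12 p <-> 0 < rho12_given3 p) /\
   (0 < rho12_given3 p <-> 0 < partial_rho12_3 p)) /\
  ((cond_dep_negative p <-> lambda12 p < 0) /\
   (lambda12 p < 0 <-> rho12_given3 p < 0) /\
   (rho12_given3 p < 0 <-> partial_rho12_3 p < 0)).
Proof.
  intros [_ Hsum] Hpal Hpos.
  pose proof (same_sign_lambda12 p Hpal Hpos) as Hlambda.
  pose proof (same_sign_rho12_given3 p Hsum Hpal Hpos) as Hcond.
  pose proof (same_sign_partial_rho12_3 p Hsum Hpal Hpos) as Hpartial.
  pose proof (cond_indep12_3_iff p Hpal) as Hindep.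
  pose proof (cond_dep_positive_iff p Hpal Hpos) as Hposdep.
  pose proof (cond_dep_negative_iff p Hpal Hpos) as Hnegdep.
  unfold same_sign in *; tauto.
Qed.
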